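(* In a black-white array (BWA) maintained by Insert and Delete operations, consider a demote operation of a segment of rank $i$. Its outcome is one of the following two. (1) If the segment of rank $i-1$ was inactive, the result is a new active segment of rank $i-1$ with occupancy rate $100\%$. (2) If the segment of rank $i-1$ was active, the result, after the merge with the segment of rank $i-1$, is a new segment of rank $i$ with occupancy rate strictly greater than $75\%$.
   Context: A black-white array (BWA) of size $N=2^K$ stores values from a totally ordered set. It has a white array $W[1..N-1]$ and a black array $B[1..N/2-1]$. For $i\ge0$, the segment of rank $i$ is the block of indices $[2^i,2^{i+1}-1]$, of size $2^i$. A state variable $\mathtt{total}$ counts stored entries, including VOID entries. The segment of rank $i$ is active iff bit $i$ of $\mathtt{total}$ is $1$. Between operations, the stored values are in the active white segments, each sorted. Insert$(v)$: if rank 0 is inactive, set $W[1]=v$; otherwise set $B[1]=v$ and perform $\mathrm{merge}(0)$. $\mathrm{merge}(i)$: merge the white and black segments of rank $i$. The sorted result goes into the white rank-$(i+1)$ segment if that segment is inactive. Otherwise it goes into the black rank-$(i+1)$ segment, followed by $\mathrm{merge}(i+1)$. An occupancy vector $V$ records, for each rank $i$, the number $V[i]$ of non-VOID values in the white segment of rank $i$. The occupancy rate of a segment is the number of its non-VOID values divided by its size. Delete$(v)$: search for $v$. If it is found at an index in the white segment of rank $i$, replace that entry by a special value VOID and decrement $V[i]$. If now $V[i]\le 2^{i-1}$ (half the segment size), perform demote$(i)$. Demote$(i)$: copy all non-VOID values of the white rank-$i$ segment into the rank-$(i-1)$ segment. They go to the white array if rank $i-1$ is inactive. If rank $i-1$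 is active, they go to the black array, followed by a merge of the black and white rank-$(i-1)$ segments into the white segment of rank $i$. The state variables are updated accordingly. *)

From HB Require Import structures.
From mathcomp Require Import all_boot all_order all_algebra.

Set Implicit Arguments.
Unset Strict Implicit.
Unset Printing Implicit Defensive.

Import Order.TTheory GRing.Theory Num.Theory.

Section BWA.
Variables (d : Order.disp_t) (T : orderType d).

Definition entry := option T.
Definition VOID : entry := None.

Definition entry_le (x y : entry) : bool :=
  match x, y with
  | None, _ => true
  | Some _, None => false
  | Some a, Some b => (a <= b)%O
  end.

Definition merge_seg (s1 s2 : seq entry) : seq entry := path.merge entry_le s1 s2.

(* State of a BWA: the counter [total] (stored entries, VOIDs included) and
   the white array, given segment by segment: [white i] is the content of the
   white segment of rank i (indices [2^i, 2^(i+1)-1]). The black array is only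
   used transiently inside operations and is represented by local values. *)
Record bwa := BWA { total : nat; white : nat -> seq entry }.

Definition active (s : bwa) (i : nat) : bool := odd (total s %/ 2 ^ i).

Definition V (s : bwa) (i : nat) : nat := count (fun x : entry => x != VOID) (white s i).

Definition occupancy (s : bwa) (i : nat) : rat := (V s i)%:R / (2 ^ i)%:R.

Definition upd (W : nat -> seq entry) (i : nat) (x : seq entry) : nat -> seq entry :=
  fun j => if j == i then x else W j.

(* merge cascade: [blk] is the black segment of rank i (for i = 0 it is B[1]).
   If rank i is inactive, blk becomes the white segment of rank i (for i = 0,
   this is "W[1] = v"); otherwise white and black rank-i segments are merged
   and the result is the black segment of rank i+1, and we continue.
   [fuel] only ensures termination (the cascade length is bounded by tot). *)
Fixpoint merge_up (fuel i tot : nat) (W : nat -> seq entry) (blk : seq entry)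
  : nat -> seq entry :=
  match fuel with
  | 0 => W
  | fuel'.+1 =>
      if odd (tot %/ 2 ^ i)
      then merge_up fuel' i.+1 tot (upd W i [::]) (merge_seg (W i) blk)
      else upd W i blk
  end.

Definition insert (s : bwa) (v : T) : bwa :=
  BWA (total s).+1 (merge_up (total s).+1 0 (total s) (white s) [:: Some v]).

Definition void_at (s : bwa) (i p : nat) : bwa :=
  BWA (total s) (upd (white s) i (set_nth VOID (white s i) p VOID)).

Definition compact (m : nat) (seg : seq entry) : seq entry :=
  let vals := filter (fun x : entry => x != VOID) seg in
  nseq (m - size vals) VOID ++ vals.

(* For i >= 1: copy the non-VOID values of the white rank-i segment
   into the rank-(i-1) segment: into the white array if rank i-1 is inactive,
   otherwise into the black array followed by a merge of black and white
   rank-(i-1) segments into the white segment of rank i.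
   For i = 0 (the segment holds no value any more) the segment simply
   becomes inactive. *)
Definition demote (s : bwa) (i : nat) : bwa :=
  match i with
  | 0 => BWA (total s).-1 (upd (white s) 0 [::])
  | j.+1 =>
      let cp := compact (2 ^ j) (white s i) in
      if active s j then
        BWA (total s - 2 ^ j) (upd (upd (white s) j [::]) i (merge_seg (white s j) cp))
      else
        BWA (total s - 2 ^ j) (upd (upd (white s) i [::]) j cp)
  end.

(* Demote is triggered when V[i] <= 2^(i-1), i.e. 2 * V[i] <= 2^i. *)
Definition demote_triggered (s : bwa) (i : nat) : bool := (V s i).*2 <= 2 ^ i.

Definition delete_at (s : bwa) (i p : nat) : bwa :=
  let s1 := void_at s i p in
  if demote_triggered s1 i then demote s1 i else s1.

Definition empty_bwa : bwa := BWA 0 (fun _ => [::]).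

(* States of a BWA of size N = 2^K reachable by Insert and Delete operations.
   Insert is possible as long as the N-1 white cells are not exhausted.
   Delete(v) searches v; any occurrence found in an active white segment may
   be the one the search returns (deleting an absent value changes nothing). *)
Inductive reachable (K : nat) : bwa -> Prop :=
  | reach_empty : reachable K empty_bwa
  | reach_insert s v : reachable K s -> (total s).+1 < 2 ^ K ->
      reachable K (insert s v)
  | reach_delete s i p v : reachable K s -> active s i ->
      nth VOID (white s i) p = Some v -> reachable K (delete_at s i p).

End BWA.

(** Every active white segment of a reachable BWA is more than half full.
    Merging two such segments of rank i (or W[1] with an inserted value) gives
    a segment of rank i+1 that is again more than half full, and a deletion
    lowers the count of its segment by one, so demote(i) fires exactly when
    the white rank-i segment holds 2^(i-1) values.  These fill the rank-(i-1)
    segment completely, or, merged with an active rank-(i-1) segment holding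
    more than 2^(i-2) values, give more than 3/4 of 2^i.  The bookkeeping of
    [total] is binary arithmetic: removing 2^(i-1) while bit i is set flips
    bit i-1 and moves its old value to bit i. *)

From mathcomp Require Import all_boot all_order all_algebra zify lra.
Import GRing.Theory Num.Theory.
Set Implicit Arguments.
Unset Strict Implicit.

Local Notation bit n k := (odd (n %/ 2 ^ k)).

Lemma bit_mulexpD_low x r j k : k < j -> bit (x * 2 ^ j + r) k = bit r k.
Proof.
move=> hkj; rewrite -(subnKC (ltnW hkj)) expnD mulnA mulnAC divnMDl ?expn_gt0 //.
by rewrite oddD oddM oddX subn_eq0 leqNgt hkj andbF.
Qed.

Lemma bit_mulexpD_high x r j k :
  r < 2 ^ j -> j <= k -> bit (x * 2 ^ j + r) k = bit x (k - j).
Proof.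
move=> hr hjk; rewrite -(subnKC hjk) expnD divnMA divnMDl ?expn_gt0 //.
by rewrite (divn_small hr) addn0 addKn.
Qed.

Lemma modn_expS_ones n i :
  n %% 2 ^ i = 2 ^ i - 1 -> bit n i -> n %% 2 ^ i.+1 = 2 ^ i.+1 - 1.
Proof.
move=> hlow hi; have pos : 0 < 2 ^ i by rewrite expn_gt0.
have -> : n = (n %/ 2 ^ i %/ 2) * 2 ^ i.+1 + (2 ^ i.+1 - 1).
  have := divn_eq (n %/ 2 ^ i) 2; rewrite modn2 hi expnS.
  have := divn_eq n (2 ^ i); rewrite hlow; nia.
by rewrite modnMDl modn_small // ltn_subrL expn_gt0.
Qed.

Lemma bit_succ_carry n i k :
  n %% 2 ^ i = 2 ^ i - 1 -> ~~ bit n i -> k != i -> bit n.+1 k = (i < k) && bit n k.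
Proof.
move=> hlow hi hki; set q := n %/ 2 ^ i in hi.
have pos : 0 < 2 ^ i by rewrite expn_gt0.
have en : n = q * 2 ^ i + (2 ^ i - 1) by rewrite {1}(divn_eq n (2 ^ i)) hlow.
have en1 : n.+1 = q.+1 * 2 ^ i + 0 by rewrite mulSn; lia.
case: (ltngtP k i) => [ltki|ltik|eqki]; last by rewrite eqki eqxx in hki.
  by rewrite en1 bit_mulexpD_low // div0n.
have r_lt : 2 ^ i - 1 < 2 ^ i by rewrite ltn_subrL pos.
rewrite en1 en !bit_mulexpD_high ?(ltnW ltik) //.
have e0 : q = q %/ 2 * 2 ^ 1 + 0.
  by rewrite addn0 expn1 {1}(divn_eq q 2) modn2 (negbTE hi) addn0.
have e1 : q.+1 = q %/ 2 * 2 ^ 1 + 1 by rewrite {1}e0 addn0 addn1.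
by rewrite /= e1 [in RHS]e0 !bit_mulexpD_high // subn_gt0.
Qed.

Lemma bits_predn q :
  bit q 1 ->
  [/\ bit q.-1 0 = ~~ bit q 0, bit q.-1 1 = bit q 0
    & forall m, 1 < m -> bit q.-1 m = bit q m].
Proof.
move=> hq; have hq2 : q %/ 2 %% 2 = 1 by rewrite modn2 -(expn1 2) hq.
have hr : q %% 4 = 2 \/ q %% 4 = 3 by lia.
have e : q = q %/ 4 * 2 ^ 2 + q %% 4 by rewrite -divn_eq.
have e' : q.-1 = q %/ 4 * 2 ^ 2 + (q %% 4).-1 by lia.
move: e e' hr; move: (q %/ 4) (q %% 4) => a r e e' hr.
rewrite e' e; split.
- by rewrite !bit_mulexpD_low //; case: hr => ->.
- by rewrite !bit_mulexpD_low //; case: hr => ->.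
- by move=> m hm; rewrite !bit_mulexpD_high //; lia.
Qed.

Lemma bits_subn_expn n j :
  bit n j.+1 ->
  [/\ forall k, k != j -> k != j.+1 -> bit (n - 2 ^ j) k = bit n k,
      bit (n - 2 ^ j) j = ~~ bit n j
    & bit (n - 2 ^ j) j.+1 = bit n j].
Proof.
move=> hn; set q := n %/ 2 ^ j; set r := n %% 2 ^ j.
have hr : r < 2 ^ j by rewrite ltn_pmod ?expn_gt0.
have en : n = q * 2 ^ j + r by rewrite -divn_eq.
have hq : bit q 1 by move: hn; rewrite en bit_mulexpD_high // subSnn.
have q_pos : 0 < q by rewrite lt0n; apply: contraTneq hq => ->.
have en' : n - 2 ^ j = q.-1 * 2 ^ j + r.
  by rewrite en -{1}(prednK q_pos) mulSn -addnA addKn.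
have [b0 b1 bhigh] := bits_predn hq.
rewrite en' en; split.
- move=> k hkj hkj1; case: (ltnP k j) => hk; first by rewrite !bit_mulexpD_low.
  rewrite !bit_mulexpD_high // bhigh //.
  by move: hkj hkj1 hk => /eqP ? /eqP ? ?; lia.
- by rewrite bit_mulexpD_high // subnn b0 expn0 divn1.
- by rewrite bit_mulexpD_high // subSnn b1 expn0 divn1.
Qed.

Lemma bit_predn_odd n k : odd n -> bit n.-1 k = (0 < k) && bit n k.
Proof.
move=> hn; have e1 : n = n %/ 2 * 2 ^ 1 + 1.
  by rewrite expn1 {1}(divn_eq n 2) modn2 hn.
have e0 : n.-1 = n %/ 2 * 2 ^ 1 + 0 by rewrite {1}e1 addn1 addn0.
case: k => [|k]; first by rewrite e0 bit_mulexpD_low.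
by rewrite e0 {2}e1 !bit_mulexpD_high.
Qed.

Section BWA.
Variables (d : Order.disp_t) (T : orderType d).
Implicit Types (s : bwa T) (W : nat -> seq (entry T)) (seg : seq (entry T)).

Local Notation nonvoid := (fun x : entry T => x != VOID T).

Lemma upd_eq W i seg : upd W i seg i = seg.
Proof. by rewrite /upd eqxx. Qed.

Lemma upd_neq W i seg k : k != i -> upd W i seg k = W k.
Proof. by rewrite /upd => /negbTE ->. Qed.

Lemma count_compact m seg : count nonvoid (compact m seg) = count nonvoid seg.
Proof.
rewrite /compact count_cat count_nseq mul0n count_filter.
by apply: eq_count => x; rewrite /= andbb.
Qed.

Definition half_full_at s k := active s k -> 2 ^ k < (V s k).*2.

Definition half_full s := forall k, half_full_at s k.

(* [tot.+1 < 2 ^ (i + fuel)] guarantees a zero bit of [tot] in [i, i + fuel),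
   where the cascade stops before running out of fuel. *)
Lemma merge_up_half_full tot fuel i W blk :
  tot %% 2 ^ i = 2 ^ i - 1 -> tot.+1 < 2 ^ (i + fuel) ->
  (forall k, i <= k -> bit tot k -> 2 ^ k < (count nonvoid (W k)).*2) ->
  2 ^ i < (count nonvoid blk).*2 ->
  forall k, bit tot.+1 k -> 2 ^ k < (count nonvoid (merge_up fuel i tot W blk k)).*2.
Proof.
elim: fuel i W blk => [|fuel IH] i W blk hlow hfuel hW hblk k /=.
  by have := leq_mod tot (2 ^ i); rewrite addn0 in hfuel; lia.
case: ifP => hi.
  apply: IH => //.
  - exact: modn_expS_ones.
  - by rewrite addSnnS.
  - by move=> k' hk' hb; rewrite upd_neq ?gtn_eqF //; apply: hW => //; apply: ltnW.
  - by rewrite count_merge count_cat expnS; have := hW i (leqnn i) hi; lia.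
move=> hk; case: (eqVneq k i) => [->|hki]; first by rewrite upd_eq.
rewrite upd_neq //; move: hk; rewrite (bit_succ_carry hlow) ?hi // => /andP[hik hk].
by apply: hW => //; apply: ltnW.
Qed.

Lemma half_full_empty : half_full (empty_bwa T).
Proof. by move=> k; rewrite /half_full_at /active div0n. Qed.

Lemma half_full_insert s v : half_full s -> half_full (insert s v).
Proof.
move=> hs k; rewrite /half_full_at; apply: (merge_up_half_full (i := 0)).
- by rewrite modn1.
- exact: ltn_expl.
- by move=> k' _; apply: hs.
- by [].
Qed.

Lemma V_void_at s i p v :
  nth (VOID T) (white s i) p = Some v -> (V (void_at s i p) i).+1 = V s i.
Proof.
move=> hv; have hp : p < size (white s i).
  by rewrite ltnNge; apply: contraTN isT => hp; rewrite nth_default in hv.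
have hpos : 0 < V s i.
  by rewrite /V -has_count; apply/hasP; exists (Some v); rewrite // -hv mem_nth.
by rewrite /V /void_at /= upd_eq count_set_nthF // hv addn0 subn1 prednK.
Qed.

Lemma V_void_at_other s i p k : k != i -> V (void_at s i p) k = V s k.
Proof. by move=> hki; rewrite /V /void_at /= upd_neq. Qed.

Lemma V_demote_triggered s j p v :
  half_full_at s j.+1 -> active s j.+1 -> nth (VOID T) (white s j.+1) p = Some v ->
  demote_triggered (void_at s j.+1 p) j.+1 -> V (void_at s j.+1 p) j.+1 = 2 ^ j.
Proof.
move=> hs hact hv; rewrite /demote_triggered expnS.
by have := hs hact; rewrite -(V_void_at hv) expnS; lia.
Qed.

Lemma demote_other s j k :
  active s j.+1 -> k != j -> k != j.+1 ->
  active (demote s j.+1) k = active s k /\ V (demote s j.+1) k = V s k.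
Proof.
move=> hact hkj hkj1; have [bk _ _] := bits_subn_expn hact.
by rewrite /demote /active /V; case: ifP => _ /=; rewrite bk // !upd_neq.
Qed.

Lemma demote_into_inactive s j :
  ~~ active s j -> active s j.+1 ->
  [/\ active (demote s j.+1) j, ~~ active (demote s j.+1) j.+1
    & V (demote s j.+1) j = V s j.+1].
Proof.
move=> hj hact; have [_ bj bj1] := bits_subn_expn hact.
by rewrite /demote (negbTE hj) /active /V /= bj bj1 upd_eq count_compact.
Qed.

Lemma demote_into_active s j :
  active s j -> active s j.+1 ->
  [/\ ~~ active (demote s j.+1) j, active (demote s j.+1) j.+1
    & V (demote s j.+1) j.+1 = V s j + V s j.+1].
Proof.
move=> hj hact; have [_ bj bj1] := bits_subn_expn hact.
rewrite /demote hj /active /V /= bj bj1 upd_eq count_merge count_cat count_compact.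
by rewrite negbK.
Qed.

Lemma half_full_demote s j :
  (forall k, k != j.+1 -> half_full_at s k) -> active s j.+1 -> V s j.+1 = 2 ^ j ->
  half_full (demote s j.+1).
Proof.
move=> hs hact hV k; rewrite /half_full_at.
have pos : 0 < 2 ^ j by rewrite expn_gt0.
case: (eqVneq k j) => [->|hkj].
  case: (boolP (active s j)) => hj.
    by have [/negbTE -> _ _] := demote_into_active hj hact.
  by have [_ _ ->] := demote_into_inactive hj hact; rewrite hV => _; lia.
case: (eqVneq k j.+1) => [->|hkj1].
  case: (boolP (active s j)) => hj.
    have [_ _ ->] := demote_into_active hj hact; rewrite hV expnS => _.
    by have := hs j (negbT (ltn_eqF (ltnSn j))) hj; lia.
  by have [_ /negbTE -> _] := demote_into_inactive hj hact.
by have [-> ->] := demote_other hact hkj hkj1; apply: hs.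
Qed.

Lemma half_full_demote0 s :
  (forall k, k != 0 -> half_full_at s k) -> active s 0 -> half_full (demote s 0).
Proof.
move=> hs h0 k; rewrite /half_full_at /active /V /= bit_predn_odd; last first.
  by move: h0; rewrite /active expn0 divn1.
by case: k => [|k] //= hk; rewrite upd_neq //; apply: (hs k.+1).
Qed.

Lemma half_full_delete s i p v :
  half_full s -> active s i -> nth (VOID T) (white s i) p = Some v ->
  half_full (delete_at s i p).
Proof.
move=> hs hact hv.
have hs1 k : k != i -> half_full_at (void_at s i p) k.
  by move=> hki; rewrite /half_full_at V_void_at_other //; apply: hs.
rewrite /delete_at; case: ifP => trig.
  case: i hact hv hs1 trig => [|j] hact hv hs1 trig; first exact: half_full_demote0.
  exact: half_full_demote (V_demote_triggered (hs _) hact hv trig).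
move=> k; case: (eqVneq k i) => [-> _|]; last exact: hs1.
by move: trig; rewrite /demote_triggered ltnNge => ->.
Qed.

Lemma reachable_half_full K s : reachable K s -> half_full s.
Proof.
elim=> [|s' v _ hs _|s' i p v _ hs hact hv].
- exact: half_full_empty.
- exact: half_full_insert.
- exact: half_full_delete hs hact hv.
Qed.

Local Open Scope ring_scope.

Lemma occupancy_full s i : V s i = (2 ^ i)%N -> occupancy s i = 1.
Proof. by move=> hV; rewrite /occupancy hV divff // pnatr_eq0 -lt0n expn_gt0. Qed.

Lemma occupancy_gt_three_quarters s i :
  (3 * 2 ^ i < 4 * V s i)%N -> 3%:R / 4%:R < occupancy s i.
Proof.
move=> h; rewrite /occupancy ltr_pdivlMr ?ltr0n ?expn_gt0 //.
have : (3 * 2 ^ i)%:R < (4 * V s i)%:R :> rat by rewrite ltr_nat.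
by rewrite !natrM; lra.
Qed.

End BWA.

Local Open Scope ring_scope.

Theorem mainTheorem3 (d : Order.disp_t) (T : orderType d) (K : nat) (s : bwa T)
    (i p : nat) (v : T) :
  reachable K s ->
  (0 < i)%N ->
  active s i ->
  nth (VOID T) (white s i) p = Some v ->
  let s1 := void_at s i p in
  demote_triggered s1 i ->
  let s2 := demote s1 i in
  (~~ active s1 i.-1 -> active s2 i.-1 /\ occupancy s2 i.-1 = 1) /\
  (active s1 i.-1 -> active s2 i /\ occupancy s2 i > 3%:R / 4%:R).
Proof.
case: i => [//|j] reach _ hact hv; rewrite [j.+1.-1]/= => s1 trig s2.
have hs := reachable_half_full reach.
have hV : V s1 j.+1 = (2 ^ j)%N := V_demote_triggered (hs _) hact hv trig.
split=> hj.
  have [a2 _ V2] := demote_into_inactive hj hact.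
  by split=> //; apply: occupancy_full; rewrite V2 hV.
have [_ a2 V2] := demote_into_active hj hact.
split=> //; apply: occupancy_gt_three_quarters.
by have := hs j hj; rewrite V2 hV V_void_at_other ?ltn_eqF // expnS; lia.
Qed.
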